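(* Let $S\subseteq\Sigma^n$ be a prime double-code and $i,i'\in[n]$. Then either $\backslash_i S=\backslash_{i'}S$ or $\backslash_i S\cap\backslash_{i'}S=\emptyset$.
   Context: Let $\Sigma=\{0,1,2,3\}$, $[n]=\{1,\ldots,n\}$. An $i$-line of $\Sigma^n$ is a set of the four words that agree in all coordinates except the $i$th; a line is an $i$-line for some $i$. A double-code is a set meeting every line in $0$ or $2$ elements; a double-MDS-code is a set meeting every line in exactly $2$ elements; a double-code is complementable if contained in a double-MDS-code, and prime if complementable, nonempty and not partitionable into two or more nonempty double-codes. For $S\subseteq\Sigma^n$ and $i\in[n]$, $\mathcal E_i(S)$ is the union of all $i$-lines that meet $S$, and $\backslash_i S=\mathcal E_i(S)\setminus S$. *)

From mathcomp Require Import all_boot.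
Set Implicit Arguments. Unset Strict Implicit. Unset Printing Implicit Defensive.

(* Sigma = {0,1,2,3} is 'I_4; words of Sigma^n are finite functions 'I_n -> 'I_4;
   coordinate i in [n] is represented by i : 'I_n (0-based). *)
Definition word (n : nat) := {ffun 'I_n -> 'I_4}.

Definition iline n (i : 'I_n) (x : word n) : {set word n} :=
  [set y : word n | [forall j : 'I_n, (j != i) ==> (y j == x j)]].

Definition is_iline n (i : 'I_n) (L : {set word n}) : Prop :=
  exists x : word n, L = iline i x.

Definition is_line n (L : {set word n}) : Prop := exists i : 'I_n, is_iline i L.

Definition double_code n (S : {set word n}) : Prop :=
  forall L : {set word n}, is_line L -> #|S :&: L| = 0 \/ #|S :&: L| = 2.

Definition double_MDS_code n (S : {set word n}) : Prop :=
  forall L : {set word n}, is_line L -> #|S :&: L| = 2.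

Definition complementable n (S : {set word n}) : Prop :=
  double_code S /\ exists M : {set word n}, double_MDS_code M /\ S \subset M.

Definition prime_double_code n (S : {set word n}) : Prop :=
  complementable S /\ S != set0 /\
  ~ (exists P : {set {set word n}},
        [/\ partition P S, 2 <= #|P| & forall B, B \in P -> double_code B]).

Definition Ecal n (i : 'I_n) (S : {set word n}) : {set word n} :=
  \bigcup_(x in S) iline i x.

Definition bslash n (i : 'I_n) (S : {set word n}) : {set word n} :=
  Ecal i S :\: S.

From mathcomp Require Import all_boot zify.
Set Implicit Arguments. Unset Strict Implicit. Unset Printing Implicit Defensive.

(* Fix distinct coordinates i and i' and cut Sigma^n into the 16-point planes in which only
   these two coordinates vary.  A point of \_i S :&: \_i' S is a "cross point" of its plane:
   it lies off S, but both of its lines inside the plane meet S.  Inside a plane, S and a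
   double-MDS code M containing S are 4x4 patterns with 0 or 2 (resp. exactly 2) points in
   every row and column, and a single cross point forces every row and column of the
   S-pattern to be occupied.  Comparing two planes joined by j-lines (j <> i, i'), where S
   and M agree as soon as S meets the line, shows that a plane with a cross point and a
   plane without one never carry points of S on a common line.  So "the plane of x has a
   cross point" is constant on S along every line, and splitting S by this property gives
   two double codes.  If \_i S and \_i' S meet but differ, both parts are nonempty,
   contradicting primality. *)

Definition row_of (a : rel 'I_4) (r : 'I_4) : {set 'I_4} := [set c | a r c].
Definition col_of (a : rel 'I_4) (c : 'I_4) : {set 'I_4} := [set r | a r c].
Definition transpose_rel (a : rel 'I_4) : rel 'I_4 := fun r c => a c r.
Definition support_rows (a : rel 'I_4) : {set 'I_4} := [set r | row_of a r != set0].
Definition support_cols (a : rel 'I_4) : {set 'I_4} := [set c | col_of a c != set0].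

Definition grid_code (a : rel 'I_4) :=
  (forall r, row_of a r != set0 -> #|row_of a r| = 2) /\
  (forall c, col_of a c != set0 -> #|col_of a c| = 2).

Definition grid_MDS_code (m : rel 'I_4) :=
  (forall r, #|row_of m r| = 2) /\ (forall c, #|col_of m c| = 2).

Definition cross_point (a : rel 'I_4) (r c : 'I_4) :=
  [&& ~~ a r c, row_of a r != set0 & col_of a c != set0].

Lemma grid_code_tr a : grid_code a -> grid_code (transpose_rel a).
Proof. by case=> hr hc; split. Qed.

Lemma grid_MDS_code_tr m : grid_MDS_code m -> grid_MDS_code (transpose_rel m).
Proof. by case=> hr hc; split. Qed.

Lemma cross_point_tr a r c : cross_point (transpose_rel a) c r = cross_point a r c.
Proof. by rewrite /cross_point; congr (_ && _); apply: andbC. Qed.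

Lemma eq_cross_point a b : a =2 b -> cross_point a =2 cross_point b.
Proof.
move=> eq_ab r c; rewrite /cross_point eq_ab.
have -> : row_of a r = row_of b r by apply/setP=> x; rewrite !inE eq_ab.
by have -> : col_of a c = col_of b c by apply/setP=> x; rewrite !inE eq_ab.
Qed.

Lemma grid_code_col_le2 a c : grid_code a -> #|col_of a c| <= 2.
Proof. by case=> _ hc; have [->|/hc->] := eqVneq (col_of a c) set0; rewrite ?cards0. Qed.

Lemma no_cross_point_row a r0 c0 :
  (forall r c, ~~ cross_point a r c) -> a r0 c0 -> row_of a r0 = support_cols a.
Proof.
move=> noX a0; have row_r0 : row_of a r0 != set0 by apply/set0Pn; exists c0; rewrite inE.
apply/setP=> c; rewrite !inE; apply/idP/idP => [arc | colc].
  by apply/set0Pn; exists r0; rewrite inE.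
by apply: contraNT (noX r0 c) => nac; rewrite /cross_point nac row_r0 colc.
Qed.

Lemma no_cross_point_col a r0 c0 :
  (forall r c, ~~ cross_point a r c) -> a r0 c0 -> col_of a c0 = support_rows a.
Proof.
move=> noX a0; apply: (@no_cross_point_row (transpose_rel a)) a0 => c r.
by rewrite cross_point_tr.
Qed.

Section GridCode.
Variables a m : rel 'I_4.
Hypotheses (ha : grid_code a) (hm : grid_MDS_code m) (sam : subrel a m).

Lemma col_MDS_code_eq c : col_of a c != set0 -> col_of m c = col_of a c.
Proof.
move=> ne; apply/esym/eqP; rewrite eqEcard (proj2 hm) (proj2 ha c ne) leqnn andbT.
by apply/subsetP=> r; rewrite !inE; apply: sam.
Qed.

Lemma row_MDS_code_empty r : row_of a r = set0 -> row_of m r \subset ~: support_cols a.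
Proof.
move=> row_r; apply/subsetP=> c mrc; rewrite !inE; apply/negP => colc.
have : r \in col_of a c by rewrite -col_MDS_code_eq // inE; rewrite inE in mrc.
by rewrite inE => arc; move: row_r => /setP/(_ c); rewrite !inE arc.
Qed.

Lemma card_support_cols_empty_row r : row_of a r = set0 -> #|support_cols a| <= 2.
Proof.
move=> /row_MDS_code_empty /subset_leq_card.
by have := cardsC (support_cols a); rewrite (proj1 hm) card_ord; lia.
Qed.

Lemma cross_point_full_rows r0 c0 : cross_point a r0 c0 -> forall r, row_of a r != set0.
Proof.
case/and3P=> na0 row_r0 col_c0 r; apply/negP=> /eqP /card_support_cols_empty_row.
have : c0 |: row_of a r0 \subset support_cols a.
  apply/subsetP=> c; rewrite !inE => /orP [/eqP-> //|arc].
  by apply/set0Pn; exists r0; rewrite inE.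
by move/subset_leq_card; rewrite cardsU1 (proj1 ha _ row_r0) inE na0 => /leq_trans h /h //.
Qed.

(* Without cross points, a is the full 2x2 block on its occupied rows and columns; on each
   empty row m then fills the two other columns, so b, which meets m only inside a, has to
   use the columns of a there, and column c0 of b would get three points. *)
Lemma no_cross_point_disjoint b r0 c0 : grid_code b -> (forall r, row_of b r != set0) ->
  (forall r c, ~~ cross_point a r c) -> (forall r c, m r c -> b r c -> a r c) ->
  a r0 c0 -> ~~ b r0 c0.
Proof.
move=> hb brows noX mba a0; apply/negP=> b0.
have row_r0 := no_cross_point_row noX a0; have col_c0 := no_cross_point_col noX a0.
have cardC : #|support_cols a| = 2.
  by rewrite -row_r0 (proj1 ha) //; apply/set0Pn; exists c0; rewrite inE.
have cardR : #|support_rows a| = 2.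
  by rewrite -col_c0 (proj2 ha) //; apply/set0Pn; exists r0; rewrite inE.
have rowm r : r \notin support_rows a -> row_of m r = ~: support_cols a.
  rewrite inE negbK => /eqP rowr; apply/eqP; rewrite eqEcard row_MDS_code_empty //=.
  have := cardsC (support_cols a); rewrite (proj1 hm) card_ord cardC => sum4.
  by rewrite -(leq_add2l 2) sum4.
have rowb r : r \notin support_rows a -> row_of b r = support_cols a.
  move=> nr; apply/eqP; rewrite eqEcard cardC (proj1 hb _ (brows r)) leqnn andbT.
  apply/subsetP=> c brc; apply: contraT => nc.
  have : c \in row_of m r by rewrite rowm // in_setC.
  rewrite inE in brc; rewrite inE => /mba /(_ brc) arc.
  by move: nr; rewrite inE negbK => /eqP /setP /(_ c); rewrite !inE arc.
have : r0 |: ~: support_rows a \subset col_of b c0.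
  apply/subsetP=> r; rewrite in_setU1 in_setC => /orP [/eqP-> |nr]; rewrite inE //.
  by have := rowb r nr; rewrite -row_r0 => /setP/(_ c0); rewrite !inE a0.
have cardCR : #|~: support_rows a| = 2.
  by apply/eqP; rewrite -(eqn_add2l 2) -{1}cardR cardsC card_ord.
move/subset_leq_card; rewrite cardsU1 [#|~: _|]cardCR in_setC negbK -{1}col_c0 inE a0.
by move=> /leq_trans/(_ (grid_code_col_le2 c0 hb)).
Qed.
End GridCode.

Lemma cross_point_full_cols a m r0 c0 : grid_code a -> grid_MDS_code m -> subrel a m ->
  cross_point a r0 c0 -> forall c, col_of a c != set0.
Proof.
move=> ha hm sam X; apply: (cross_point_full_rows (grid_code_tr ha) (grid_MDS_code_tr hm)).
  by move=> ? ?; apply: sam.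
by rewrite cross_point_tr; apply: X.
Qed.

Lemma card_setI_imset (T U : finType) (f : T -> U) (A : {set U}) :
  injective f -> #|A :&: [set f x | x : T]| = #|f @^-1: A|.
Proof.
move=> inj_f; rewrite -(card_imset _ inj_f); apply: eq_card => y.
rewrite inE; apply/andP/imsetP => [[yA /imsetP [x _ def_y]] | [x]].
  by exists x; rewrite // inE -def_y.
by rewrite inE => fxA ->; rewrite fxA imset_f.
Qed.

Lemma preim_partition_card_gt1 (T : finType) (rT : eqType) (f : T -> rT) (D : {set T}) x y :
  x \in D -> y \in D -> f x != f y -> 1 < #|preim_partition f D|.
Proof.
move=> xD yD fxy; apply/card_gt1P.
exists [set z in D | f x == f z], [set z in D | f y == f z].
split; rewrite ?imset_f //; apply/eqP => /setP /(_ x).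
by rewrite !inE xD eqxx eq_sym (negbTE fxy).
Qed.

Lemma ilineP n (k : 'I_n) (y x : word n) :
  reflect (forall j, j != k -> y j = x j) (y \in iline k x).
Proof.
rewrite inE; apply: (iffP forallP) => [h j nj | h j].
  by move: (h j); rewrite nj => /eqP.
by apply/implyP=> nj; apply/eqP; apply: h.
Qed.

Lemma iline_sym n (k : 'I_n) (y x : word n) : (y \in iline k x) = (x \in iline k y).
Proof. by apply/ilineP/ilineP=> h j nj; rewrite h. Qed.

Lemma iline_trans n (k : 'I_n) (y z x : word n) :
  y \in iline k x -> z \in iline k x -> y \in iline k z.
Proof. by move=> /ilineP yx /ilineP zx; apply/ilineP=> j nj; rewrite yx // zx. Qed.

Lemma double_code_line_eq n (S M : {set word n}) (L : {set word n}) :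
  double_code S -> double_MDS_code M -> S \subset M -> is_line L ->
  S :&: L != set0 -> S :&: L = M :&: L.
Proof.
move=> hS hM sSM lineL neSL; apply/eqP; rewrite eqEcard setSI //= hM //.
by case: (hS L lineL) => [/eqP|->]; rewrite ?cards_eq0 ?(negbTE neSL).
Qed.

Lemma preim_partition_double_code n (S : {set word n}) (rT : eqType) (f : word n -> rT) :
  double_code S -> (forall L, is_line L -> {in S :&: L &, forall z w, f z = f w}) ->
  {in preim_partition f S, forall B, double_code B}.
Proof.
move=> hS f_line _ /imsetP [x _ ->] L lineL.
have [SL0 | [z zSL]] := set_0Vmem (S :&: L).
  left; apply/eqP; rewrite cards_eq0 -subset0 -SL0.
  by apply/subsetP=> y; rewrite !inE => /andP [/andP [-> _] ->].
have fz y : y \in S -> y \in L -> f y = f z.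
  by move=> yS yL; apply: (f_line L lineL) => //; rewrite inE yS.
have [fxz | nfxz] := eqVneq (f x) (f z).
  suff -> : [set y in S | f x == f y] :&: L = S :&: L by apply: hS.
  apply/setP=> y; rewrite !inE; case yS: (y \in S); case yL: (y \in L); rewrite ?andbF //=.
  by rewrite fxz (fz y) // eqxx.
left; apply/eqP; rewrite cards_eq0; apply/eqP/setP=> y; rewrite !inE.
by apply/negP => /andP [/andP [yS fxy] yL]; move: fxy; rewrite (fz y yS yL) (negbTE nfxz).
Qed.

Section Plane.
Variables (n : nat) (i i' : 'I_n).
Hypothesis neq_ii' : i != i'.

Definition plane (x : word n) (r c : 'I_4) : word n :=
  [ffun j => if j == i then r else if j == i' then c else x j].

(* Rows are indexed by coordinate i, so i-lines are columns and i'-lines are rows. *)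
Definition slice (A : {set word n}) (x : word n) : rel 'I_4 :=
  fun r c => plane x r c \in A.

Lemma plane_i (x : word n) r c : plane x r c i = r.
Proof. by rewrite ffunE eqxx. Qed.

Lemma plane_i' (x : word n) r c : plane x r c i' = c.
Proof. by rewrite ffunE eq_sym (negbTE neq_ii') eqxx. Qed.

Lemma plane_plane (x : word n) r c r' c' : plane (plane x r c) r' c' = plane x r' c'.
Proof. by apply/ffunP=> j; rewrite !ffunE; case: (j == i); case: (j == i'). Qed.

Lemma plane_eq (x y : word n) : (forall j, j != i -> j != i' -> y j = x j) ->
  plane x (y i) (y i') = y.
Proof.
move=> yx; apply/ffunP=> j; rewrite ffunE.
by case: eqP => [-> // | /eqP nji]; case: eqP => [-> // | /eqP nji']; rewrite yx.
Qed.

Lemma iline_plane (k : 'I_n) (x y : word n) : (k == i) || (k == i') -> y \in iline k x ->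
  plane x (y i) (y i') = y.
Proof.
move=> /orP k_ii' /ilineP yx; apply: plane_eq => j nji nji'; apply: yx.
by case: k_ii' => /eqP->.
Qed.

Lemma plane_iline (k : 'I_n) (x y : word n) r c :
  y \in iline k x -> plane y r c \in iline k (plane x r c).
Proof.
move=> /ilineP yx; apply/ilineP=> j nj; rewrite !ffunE.
by case: (j == i); case: (j == i'); rewrite ?yx.
Qed.

Lemma iline_i_plane (x : word n) r c : iline i (plane x r c) = [set plane x r' c | r' : 'I_4].
Proof.
apply/setP=> y; apply/ilineP/imsetP => [yx | [r' _ ->] j nj].
  exists (y i) => //; apply/ffunP=> j; rewrite ffunE.
  by case: eqP => [-> // | /eqP nj]; rewrite yx // ffunE (negbTE nj).
by rewrite !ffunE (negbTE nj).
Qed.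

Lemma iline_i'_plane (x : word n) r c :
  iline i' (plane x r c) = [set plane x r c' | c' : 'I_4].
Proof.
apply/setP=> y; apply/ilineP/imsetP => [yx | [c' _ ->] j nj].
  exists (y i') => //; apply/ffunP=> j; rewrite ffunE.
  case: eqP => [-> | /eqP nji]; first by rewrite yx ?plane_i // eq_sym.
  by case: eqP => [-> // | /eqP nj]; rewrite yx // ffunE (negbTE nji) (negbTE nj).
by rewrite !ffunE (negbTE nj).
Qed.

Lemma card_iline_i (A : {set word n}) x r c :
  #|A :&: iline i (plane x r c)| = #|col_of (slice A x) c|.
Proof.
rewrite iline_i_plane card_setI_imset // => r1 r2 /(congr1 (fun y : word n => y i)).
by rewrite !plane_i.
Qed.

Lemma card_iline_i' (A : {set word n}) x r c :
  #|A :&: iline i' (plane x r c)| = #|row_of (slice A x) r|.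
Proof.
rewrite iline_i'_plane card_setI_imset // => c1 c2 /(congr1 (fun y : word n => y i')).
by rewrite !plane_i'.
Qed.

Lemma plane_Ecal_i (A : {set word n}) x r c :
  (plane x r c \in Ecal i A) = (col_of (slice A x) c != set0).
Proof.
apply/bigcupP/set0Pn => [[z zA] | [r' r'A]].
  rewrite iline_sym iline_i_plane => /imsetP [r' _ def_z].
  by exists r'; rewrite inE /slice -def_z.
exists (plane x r' c); first by rewrite inE in r'A.
by rewrite iline_i_plane; apply/imsetP; exists r.
Qed.

Lemma plane_Ecal_i' (A : {set word n}) x r c :
  (plane x r c \in Ecal i' A) = (row_of (slice A x) r != set0).
Proof.
apply/bigcupP/set0Pn => [[z zA] | [c' c'A]].
  rewrite iline_sym iline_i'_plane => /imsetP [c' _ def_z].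
  by exists c'; rewrite inE /slice -def_z.
exists (plane x r c'); first by rewrite inE in c'A.
by rewrite iline_i'_plane; apply/imsetP; exists c.
Qed.

Lemma Ecal_plane (k : 'I_n) (A : {set word n}) y : (k == i) || (k == i') ->
  y \in Ecal k A -> exists2 x, x \in A & plane x (y i) (y i') = y.
Proof. by move=> k_ii' /bigcupP [x xA yx]; exists x => //; apply: iline_plane yx. Qed.

Lemma iline_is_line (k : 'I_n) (x : word n) : is_line (iline k x).
Proof. by exists k, x. Qed.

Lemma grid_code_slice (S : {set word n}) : double_code S -> forall x, grid_code (slice S x).
Proof.
move=> hS x; split=> [r | c] ne.
  have := hS _ (iline_is_line i' (plane x r ord0)); rewrite card_iline_i'.
  by case=> [/eqP | //]; rewrite cards_eq0 (negbTE ne).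
have := hS _ (iline_is_line i (plane x ord0 c)); rewrite card_iline_i.
by case=> [/eqP | //]; rewrite cards_eq0 (negbTE ne).
Qed.

Lemma grid_MDS_code_slice (M : {set word n}) :
  double_MDS_code M -> forall x, grid_MDS_code (slice M x).
Proof.
move=> hM x; split=> [r | c].
  by rewrite -(card_iline_i' M x r ord0) (hM _ (iline_is_line _ _)).
by rewrite -(card_iline_i M x ord0) (hM _ (iline_is_line _ _)).
Qed.

Lemma slice_subrel (S M : {set word n}) x : S \subset M -> subrel (slice S x) (slice M x).
Proof. by move=> sSM r c; apply: (subsetP sSM). Qed.

Variable S : {set word n}.

Definition has_cross (x : word n) := [exists r, exists c, cross_point (slice S x) r c].

Lemma plane_bslashI x r c :
  (plane x r c \in bslash i S :&: bslash i' S) = cross_point (slice S x) r c.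
Proof.
rewrite in_setI /bslash !in_setD plane_Ecal_i plane_Ecal_i' /cross_point /slice.
by case: (_ \in S); rewrite //= andbC.
Qed.

Lemma has_cross_plane x r c : has_cross (plane x r c) = has_cross x.
Proof.
apply: eq_existsb => r'; apply: eq_existsb => c'; apply: eq_cross_point => r1 c1.
by rewrite /slice plane_plane.
Qed.

Variable M : {set word n}.
Hypotheses (hS : double_code S) (hM : double_MDS_code M) (sSM : S \subset M).

Lemma has_cross_Ecal x r c : has_cross x -> plane x r c \in Ecal i S :&: Ecal i' S.
Proof.
case/existsP=> r0 /existsP [c0 X0].
have gS := grid_code_slice hS x; have gM := grid_MDS_code_slice hM x.
have sSMx : subrel (slice S x) (slice M x) := slice_subrel sSM.
by rewrite inE plane_Ecal_i plane_Ecal_i' (cross_point_full_rows gS gM sSMx X0)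
  (cross_point_full_cols gS gM sSMx X0).
Qed.

Lemma has_cross_iline (j : 'I_n) z w : j != i -> j != i' -> w \in iline j z ->
  z \in S -> w \in S -> has_cross z -> has_cross w.
Proof.
move=> nji nji' wz zS wS /existsP [r0 /existsP [c0 X0]]; apply: contraT => nXw.
have noX r c : ~~ cross_point (slice S w) r c.
  by apply: contra nXw => X; apply/existsP; exists r; apply/existsP; exists c.
have z_rows := cross_point_full_rows (grid_code_slice hS z) (grid_MDS_code_slice hM z)
  (slice_subrel sSM) X0.
have transfer r c : slice M w r c -> slice S z r c -> slice S w r c.
  rewrite /slice => Mw Sz; set L := iline j (plane w r c).
  have SzL : plane z r c \in S :&: L by rewrite inE Sz iline_sym plane_iline.
  have wL : plane w r c \in M :&: L by rewrite inE Mw; apply/ilineP.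
  rewrite -(double_code_line_eq hS hM sSM (iline_is_line _ _)) in wL.
    by case/setIP: wL.
  by apply/set0Pn; exists (plane z r c).
have [wzi wzi'] : w i = z i /\ w i' = z i'.
  by move/ilineP: wz => wz; rewrite !wz // eq_sym.
have := no_cross_point_disjoint (grid_code_slice hS w) (grid_MDS_code_slice hM w)
  (slice_subrel sSM) (grid_code_slice hS z) z_rows noX transfer (r0 := w i) (c0 := w i').
by rewrite /slice plane_eq // wzi wzi' plane_eq // wS zS => /(_ isT).
Qed.

Lemma has_cross_line_const L :
  is_line L -> {in S :&: L &, forall z w, has_cross z = has_cross w}.
Proof.
move=> [j [u ->]] z w /setIP [zS zu] /setIP [wS wu].
have wz := iline_trans wu zu.
have [j_ii' | ] := boolP ((j == i) || (j == i')).
  by rewrite -(iline_plane j_ii' wz) has_cross_plane.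
rewrite negb_or => /andP [nji nji']; apply/idP/idP; first exact: has_cross_iline wz zS wS.
exact: has_cross_iline nji nji' (iline_trans zu wu) wS zS.
Qed.

Lemma bslashI_has_cross y :
  y \in bslash i S :&: bslash i' S -> exists2 x, x \in S & has_cross x.
Proof.
move=> yI; have yE : y \in Ecal i S by move: yI; rewrite !inE => /andP [/andP [_ ->]].
have [x xS def_y] : exists2 x, x \in S & plane x (y i) (y i') = y.
  by apply: Ecal_plane yE; rewrite eqxx.
exists x => //; apply/existsP; exists (y i); apply/existsP; exists (y i').
by rewrite -plane_bslashI def_y.
Qed.

Lemma bslash_neq_no_cross :
  bslash i S != bslash i' S -> exists2 x, x \in S & ~~ has_cross x.
Proof.
move=> neq; have [y hy] : exists y, (y \in bslash i S) != (y \in bslash i' S).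
  apply/existsP; apply: contraNT neq => /existsPn eq_y.
  by apply/eqP/setP=> y; apply/eqP/negPn/eq_y.
have yS : y \notin S by move: hy; rewrite /bslash !in_setD; case: (y \in S).
have [k k_ii' yE] : exists2 k, (k == i) || (k == i') & y \in Ecal k S.
  move: hy; rewrite /bslash !in_setD yS /=.
  have [yE _ | _] := boolP (y \in Ecal i S); first by exists i; rewrite ?eqxx.
  by case: (boolP (y \in Ecal i' S)) => // yE _; exists i'; rewrite ?eqxx ?orbT.
have [x xS def_y] := Ecal_plane k_ii' yE.
exists x => //; apply: contra hy => Xx; rewrite /bslash !in_setD yS /=.
by move: (has_cross_Ecal (y i) (y i') Xx); rewrite def_y => /setIP [-> ->].
Qed.

End Plane.

Theorem proposition6 (n : nat) (S : {set word n}) (i i' : 'I_n) :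
  prime_double_code S ->
  bslash i S = bslash i' S \/ bslash i S :&: bslash i' S = set0.
Proof.
move=> [[hS [M [hM sSM]]] [_ no_split]].
have [<- | neq_ii'] := eqVneq i i'; first by left.
have [| neq] := eqVneq (bslash i S) (bslash i' S); first by left.
right; have [// | [y yI]] := set_0Vmem (bslash i S :&: bslash i' S).
have [x xS Xx] := bslashI_has_cross neq_ii' yI.
have [x' x'S nXx'] := bslash_neq_no_cross neq_ii' hS hM sSM neq.
case: no_split; exists (preim_partition (has_cross i i' S) S); split.
- exact: preim_partitionP.
- by apply: (preim_partition_card_gt1 xS x'S); rewrite Xx (negbTE nXx').
- exact: preim_partition_double_code hS (has_cross_line_const neq_ii' hS hM sSM).
Qed.
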